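(* Let $\mathcal{D}$ be a $\{K_3,K_4\}$-decomposition of $K_{18}$ with $\alpha=13$, let $W$ be the set of vertices $x$ with $\alpha_x\ge 2$, and for $i\in\{0,1,2,3\}$ let $t_i$ be the number of copies of $K_3$ in $\mathcal{D}$ having exactly $i$ vertices in $W$. Then $(t_0,t_1,t_2,t_3)\neq(1,0,8,4)$.
   Context: A $\{K_3,K_4\}$-decomposition of $K_v$ is a collection of subgraphs, each isomorphic to $K_3$ or $K_4$, such that every edge of $K_v$ lies in exactly one of them. $\alpha$ is the number of copies of $K_3$ in the decomposition, and for a vertex $x$, $\alpha_x$ is the number of copies of $K_3$ in the decomposition containing $x$. *)

From mathcomp Require Import all_boot.
Set Implicit Arguments. Unset Strict Implicit. Unset Printing Implicit Defensive.

(* A {K3,K4}-decomposition of K_v, with vertex set 'I_v, given as a list of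
   blocks (vertex sets of the K3/K4 copies). *)
Definition is_K34_decomposition (v : nat) (D : seq {set 'I_v}) : Prop :=
  (forall B, B \in D -> (#|B| == 3) || (#|B| == 4)) /\
  (forall x y : 'I_v, x != y -> count (fun B : {set 'I_v} => (x \in B) && (y \in B)) D = 1).

Definition alpha (v : nat) (D : seq {set 'I_v}) : nat :=
  count (fun B : {set 'I_v} => #|B| == 3) D.

Definition alpha_x (v : nat) (D : seq {set 'I_v}) (x : 'I_v) : nat :=
  count (fun B : {set 'I_v} => (#|B| == 3) && (x \in B)) D.

Definition Wset (v : nat) (D : seq {set 'I_v}) : {set 'I_v} :=
  [set x | 2 <= alpha_x D x].

Definition t_count (v : nat) (D : seq {set 'I_v}) (i : nat) : nat :=
  count (fun B : {set 'I_v} => (#|B| == 3) && (#|B :&: Wset D| == i)) D.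

From mathcomp Require Import all_boot zify.
Set Implicit Arguments. Unset Strict Implicit. Unset Printing Implicit Defensive.

(* Every vertex lies on 17 edges, so 2 alpha_x + 3 kappa_x = 17, where kappa_x
   counts the copies of K4 through x; hence alpha_x is odd, and alpha_x = 1 off W.
   Counting incidences between triangles and W gives
   sum_{x in W} alpha_x = t_1 + 2 t_2 + 3 t_3 = 28, while sum_x alpha_x = 3 alpha = 39;
   this forces |W| = 7, then sum_{x in W} kappa_x = 21, and counting edges shows
   that there are 19 copies of K4.  Since every pair of vertices of W lies in
   exactly one block, sum_B m_B (m_B - 1) = 7 * 6 = 42 where m_B = |B :&: W|.
   The triangles contribute 2 t_2 + 6 t_3 = 40 to this sum, and, as
   m (m - 1) >= 2 m - 2, the copies of K4 contribute at least 2 * 21 - 2 * 19 = 4. *)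

Lemma count_and_sum (T : Type) (a b : pred T) (s : seq T) :
  count (fun y => a y && b y) s = \sum_(y <- s | b y) a y.
Proof.
by elim: s => [|y s IH]; rewrite ?big_nil ?big_cons //= IH; case: (a y) (b y) => [] [].
Qed.

Section Incidences.
Variables (v : nat) (D : seq {set 'I_v}).

Definition kappa_x (x : 'I_v) : nat :=
  count (fun B : {set 'I_v} => (#|B| == 4) && (x \in B)) D.

Definition kappa : nat := count (fun B : {set 'I_v} => #|B| == 4) D.

Lemma sum_count_mem (P : pred {set 'I_v}) (S : {set 'I_v}) :
  \sum_(x in S) count (fun B => P B && (x \in B)) D =
  \sum_(B <- D | P B) #|B :&: S|.
Proof.
under eq_bigr do rewrite -sum1_count big_mkcondr.
rewrite exchange_big; apply: eq_bigr => B _.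
by rewrite -big_mkcondr sum1_card; apply: eq_card => x; rewrite !inE andbC.
Qed.

Lemma big_count_const (P : pred {set 'I_v}) (F : {set 'I_v} -> nat) (n : nat) :
  (forall B, P B -> F B = n) -> \sum_(B <- D | P B) F B = n * count P D.
Proof.
move=> FB; rewrite -sum1_count big_distrr.
by apply: eq_bigr => B /FB ->; rewrite /= muln1.
Qed.

Lemma sum_triangles_t_count (F : nat -> nat) :
  \sum_(B <- D | #|B| == 3) F #|B :&: Wset D| =
  F 0 * t_count D 0 + F 1 * t_count D 1 + F 2 * t_count D 2 + F 3 * t_count D 3.
Proof.
rewrite /t_count -!sum1_count !big_mkcondr !big_distrr -!big_split /=.
apply: eq_bigr => B /eqP B3.
have : #|B :&: Wset D| < 4 by rewrite -B3 ltnS subset_leq_card ?subsetIl.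
by case: #|_| => [|[|[|[|]]]] //= _; lia.
Qed.

Lemma sum_card_leq_pairs (P : pred {set 'I_v}) (S : {set 'I_v}) :
  2 * \sum_(B <- D | P B) #|B :&: S| <=
  \sum_(B <- D | P B) #|B :&: S| * #|B :&: S|.-1 + 2 * count P D.
Proof.
rewrite -sum1_count !big_distrr -big_split /=; apply: leq_sum => B _.
by case: #|_| => [|[|m]] //=; nia.
Qed.

Hypothesis decD : is_K34_decomposition D.

Lemma sum_blocks_split (F : {set 'I_v} -> nat) :
  \sum_(B <- D) F B = \sum_(B <- D | #|B| == 3) F B + \sum_(B <- D | #|B| == 4) F B.
Proof.
rewrite (bigID (fun B : {set 'I_v} => #|B| == 3)) /=; congr (_ + _).
rewrite big_seq_cond [RHS]big_seq_cond; apply: eq_bigl => B.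
have [sizeD _] := decD.
by case: (boolP (B \in D)) => // /sizeD /orP[] /eqP ->.
Qed.

Lemma sum_card_blocks_through x (S : {set 'I_v}) :
  x \notin S -> \sum_(B <- D | x \in B) #|B :&: S| = #|S|.
Proof.
have [_ pairD] := decD.
move=> xS; rewrite -(sum_count_mem (fun B => x \in B)) -sum1_card.
by apply: eq_bigr => y yS; apply: pairD; apply: contraNneq xS => ->.
Qed.

Lemma degree_alpha_x x : 2 * alpha_x D x + 3 * kappa_x x = v.-1.
Proof.
have [sizeD _] := decD.
have := sum_card_blocks_through (x := x) (S := [set~ x]).
rewrite !inE eqxx cardsC1 card_ord => /(_ isT) <-.
rewrite /alpha_x /kappa_x !count_and_sum !big_distrr -big_split /=.
rewrite big_seq_cond [RHS]big_seq_cond; apply: eq_bigr => B /andP[/sizeD sizeB xB].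
rewrite -setDE (cardsD1 x B) xB add1n !eqSS in sizeB *.
by case/orP: sizeB => /eqP ->.
Qed.

Lemma sum_card_pairs (S : {set 'I_v}) :
  \sum_(B <- D) #|B :&: S| * #|B :&: S|.-1 = #|S| * #|S|.-1.
Proof.
transitivity (\sum_(x in S) \sum_(B <- D | x \in B) #|B :&: (S :\ x)|); last first.
  rewrite -sum_nat_const; apply: eq_bigr => x xS.
  by rewrite sum_card_blocks_through ?setD11 // (cardsD1 x S) xS.
rewrite (exchange_big_dep predT) //=; apply: eq_bigr => B _.
rewrite (eq_bigl (mem (B :&: S))) => [|y]; last by rewrite !inE andbC.
rewrite -sum_nat_const; apply: eq_bigr => y yBS.
by rewrite setIDA (cardsD1 y (B :&: S)) yBS.
Qed.

Lemma sum_degree (S : {set 'I_v}) :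
  2 * \sum_(x in S) alpha_x D x + 3 * \sum_(x in S) kappa_x x = #|S| * v.-1.
Proof.
rewrite !big_distrr -big_split -sum_nat_const.
by apply: eq_bigr => x _; exact: degree_alpha_x.
Qed.

Lemma count_edges : 6 * alpha D + 12 * kappa = v * v.-1.
Proof.
transitivity (#|[set: 'I_v]| * #|[set: 'I_v]|.-1); last by rewrite cardsT card_ord.
rewrite -sum_card_pairs sum_blocks_split.
rewrite (big_count_const (n := 6)) => [|B /eqP]; last by rewrite setIT => ->.
by rewrite (big_count_const (n := 12)) => // B /eqP; rewrite setIT => ->.
Qed.

End Incidences.

Theorem mainTheorem14 (D : seq {set 'I_18}) :
  is_K34_decomposition D -> alpha D = 13 ->
  (t_count D 0, t_count D 1, t_count D 2, t_count D 3) <> (1, 0, 8, 4).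
Proof.
move=> decD alpha13 [_ t1 t2 t3].
have sumA_W : \sum_(x in Wset D) alpha_x D x = 28.
  by rewrite sum_count_mem (sum_triangles_t_count D id) t1 t2 t3.
have sumA : \sum_(x in setT) alpha_x D x = 39.
  rewrite sum_count_mem (big_count_const D (n := 3)) -/(alpha D) ?alpha13 //.
  by move=> B /eqP; rewrite setIT.
have sumA_out : \sum_(x in ~: Wset D) alpha_x D x = #|~: Wset D|.
  rewrite -sum1_card; apply: eq_bigr => x; rewrite !inE -ltnNge => ltx2.
  by have := degree_alpha_x decD x; lia.
have cardW : #|Wset D| = 7.
  have : 28 + #|~: Wset D| = 39.
    by rewrite -sumA -sumA_W -sumA_out [RHS](big_setID (Wset D)) setTI setTD.
  by have := cardsC (Wset D); rewrite card_ord; lia.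
have sumK_W : \sum_(x in Wset D) kappa_x D x = 21.
  by have := sum_degree decD (Wset D); rewrite sumA_W cardW; lia.
have kappa19 : kappa D = 19 by have := count_edges decD; rewrite alpha13; lia.
have := sum_card_pairs decD (Wset D).
rewrite (sum_blocks_split decD) (sum_triangles_t_count D (fun m => m * m.-1)) t2 t3 cardW.
have := sum_card_leq_pairs D (fun B => #|B| == 4) (Wset D).
rewrite -sum_count_mem sumK_W -/(kappa D) kappa19.
lia.
Qed.
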